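(* Let $\lambda$ be a nonzero real number. For every $n\in\mathbb{N}$ and every real $x$ with $1+\lambda x>0$, \[ \mathrm{Bel}_{n,\lambda}'(x)=\frac{1}{1+\lambda x}\sum_{l=0}^{n-1}\binom{n}{l}\big(\mathrm{Bel}_{l,\lambda}(x)-\lambda\,\mathrm{Bel}_{l+1,\lambda}(x)\big), \] where $\mathrm{Bel}_{n,\lambda}'(x)=\frac{d}{dx}\mathrm{Bel}_{n,\lambda}(x)$.
   Context: For nonzero real $\lambda$, $e_\lambda(x)=(1+\lambda x)^{1/\lambda}$ and $e_\lambda^{-1}(x)=(1+\lambda x)^{-1/\lambda}$. The new type degenerate Bell polynomials $\mathrm{Bel}_{n,\lambda}(x)$ are defined by $e_{\lambda}(xe^{t})\,e_{\lambda}^{-1}(x)=\big(\frac{1+\lambda xe^t}{1+\lambda x}\big)^{1/\lambda}=\sum_{n=0}^{\infty}\mathrm{Bel}_{n,\lambda}(x)\frac{t^{n}}{n!}$ (expansion in powers of $t$). *)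

From Stdlib Require Import Reals List.
From Coquelicot Require Import Coquelicot.
Open Scope R_scope.

(* Generating function  t |-> ((1 + lam x e^t)/(1 + lam x))^(1/lam).
   Real power via Rpower (base is positive for t near 0 when 1 + lam x > 0). *)
Definition bel_gen (lam x t : R) : R :=
  Rpower ((1 + lam * x * exp t) / (1 + lam * x)) (1 / lam).

(* Bel_{n,lam}(x) = n-th Taylor coefficient times n!, i.e. the n-th
   derivative in t at t = 0 of the generating function. *)
Definition Bel (n : nat) (lam x : R) : R :=
  Derive_n (fun t => bel_gen lam x t) n 0.

Definition sum_lt (n : nat) (f : nat -> R) : R :=
  fold_right Rplus 0 (map f (seq 0 n)).

From Stdlib Require Import Reals List Lra Lia.
From Coquelicot Require Import Coquelicot.
Open Scope R_scope.

(* With s(t) = x e^t / (1 + lam x e^t) one has G' = s G and s' = s (1 - lam s) for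
   the generating function G, so the t-derivatives of G are G(t) P_k(s(t)) with
   P_0 = 1 and P_{k+1} = s P_k + s (1 - lam s) P_k'.  Hence
   Bel_k(x) = P_k(x / (1 + lam x)), and the theorem reduces to the polynomial identity
     sum_{l<n} C(n,l) (P_l - lam P_{l+1}) = (1 - lam s) P_n'.
   Writing P_l - lam P_{l+1} = (1 - lam s) U_l with U_l = P_l - lam s P_l', one checks
   U_{l+1} = (1 - lam) s U_l + s (1 - lam s) U_l', and Pascal's rule then proves
   sum_{l<n} C(n,l) U_l = P_n' by induction on n. *)

Lemma sum_lt_succ_l (n : nat) (f : nat -> R) :
  sum_lt (S n) f = f O + sum_lt n (fun k => f (S k)).
Proof. unfold sum_lt. cbn [seq map fold_right]. now rewrite <- seq_shift, map_map. Qed.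

Lemma sum_lt_succ_r (n : nat) (f : nat -> R) : sum_lt (S n) f = sum_lt n f + f n.
Proof.
  revert f; induction n as [|n IH]; intros f.
  - unfold sum_lt; simpl; ring.
  - rewrite sum_lt_succ_l, IH, (sum_lt_succ_l n f). ring.
Qed.

Lemma sum_lt_ext (n : nat) (f g : nat -> R) :
  (forall k, (k < n)%nat -> f k = g k) -> sum_lt n f = sum_lt n g.
Proof.
  induction n as [|n IH]; intros Hfg; [reflexivity|].
  rewrite !sum_lt_succ_r, (Hfg n) by lia.
  now rewrite IH by (intros k Hk; apply Hfg; lia).
Qed.

Lemma sum_lt_plus (n : nat) (f g : nat -> R) :
  sum_lt n (fun k => f k + g k) = sum_lt n f + sum_lt n g.
Proof.
  induction n as [|n IH]; [unfold sum_lt; simpl; ring|].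
  rewrite !sum_lt_succ_r, IH. ring.
Qed.

Lemma sum_lt_scal (n : nat) (c : R) (f : nat -> R) :
  sum_lt n (fun k => c * f k) = c * sum_lt n f.
Proof.
  induction n as [|n IH]; [unfold sum_lt; simpl; ring|].
  rewrite !sum_lt_succ_r, IH. ring.
Qed.

Lemma is_derive_sum_lt (n : nat) (f : nat -> R -> R) (df : nat -> R) (t : R) :
  (forall k, (k < n)%nat -> is_derive (f k) t (df k)) ->
  is_derive (fun u => sum_lt n (fun k => f k u)) t (sum_lt n df).
Proof.
  induction n as [|n IH]; intros Hf.
  - exact (is_derive_const 0 t).
  - rewrite sum_lt_succ_r.
    apply (is_derive_ext (fun u => sum_lt n (fun k => f k u) + f n u)).
    { intros u; now rewrite sum_lt_succ_r. }
    apply (is_derive_plus (fun u => sum_lt n (fun k => f k u)) (f n)).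
    + apply IH; intros k Hk; apply Hf; lia.
    + apply Hf; lia.
Qed.

Lemma sum_lt_pascal (n : nat) (u : nat -> R) :
  sum_lt (S n) (fun l => Binomial.C (S n) l * u l) =
  sum_lt (S n) (fun l => Binomial.C n l * u l) + sum_lt n (fun l => Binomial.C n l * u (S l)).
Proof.
  rewrite !sum_lt_succ_l, !C_n_0.
  rewrite (sum_lt_ext n _ (fun l => Binomial.C n l * u (S l) + Binomial.C n (S l) * u (S l))).
  - rewrite sum_lt_plus. ring.
  - intros l Hl. rewrite <- pascal by exact Hl. ring.
Qed.

Fixpoint peval (p : list R) (y : R) : R :=
  match p with nil => 0 | c :: q => c + y * peval q y end.

Fixpoint padd (p q : list R) : list R :=
  match p, q with
  | nil, _ => q
  | _, nil => p
  | a :: p', b :: q' => (a + b) :: padd p' q'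
  end.

Definition pscale (c : R) (p : list R) : list R := map (Rmult c) p.

Fixpoint pder (p : list R) : list R :=
  match p with nil => nil | c :: q => padd q (0 :: pder q) end.

Lemma peval_padd (p q : list R) (y : R) : peval (padd p q) y = peval p y + peval q y.
Proof.
  revert q; induction p as [|a p IH]; intros [|b q]; simpl; try ring.
  rewrite IH; ring.
Qed.

Lemma peval_pscale (c : R) (p : list R) (y : R) : peval (pscale c p) y = c * peval p y.
Proof. induction p as [|a p IH]; simpl; [ring|]. rewrite IH; ring. Qed.

Lemma is_derive_peval (p : list R) (y : R) : is_derive (peval p) y (peval (pder p) y).
Proof.
  induction p as [|c q IH]; simpl.
  - exact (is_derive_const 0 y).
  - rewrite peval_padd; simpl.
    replace (peval q y + (0 + y * peval (pder q) y))
      with (0 + (1 * peval q y + y * peval (pder q) y)) by ring.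
    apply (is_derive_plus (fun _ => c) (fun y => y * peval q y)).
    + exact (is_derive_const c y).
    + exact (Derive.is_derive_mult (fun y => y) (peval q) y 1 _ (is_derive_id y) IH).
Qed.

Lemma Derive_peval (p : list R) (y : R) : Derive (fun z => peval p z) y = peval (pder p) y.
Proof. apply is_derive_unique, is_derive_peval. Qed.

Lemma ex_derive_peval (p : list R) (y : R) : ex_derive (peval p) y.
Proof. eexists; apply is_derive_peval. Qed.

Section BelPoly.

Variable lam : R.

Fixpoint bel_poly (k : nat) : list R :=
  match k with
  | O => 1 :: nil
  | S k => let p := bel_poly k in
      0 :: padd p (padd (pder p) (pscale (- lam) (0 :: pder p)))
  end.

Local Notation P k := (peval (bel_poly k)).
Local Notation P' k := (peval (pder (bel_poly k))).
Local Notation P'' k := (peval (pder (pder (bel_poly k)))).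

Lemma peval_bel_poly_S (k : nat) (s : R) :
  P (S k) s = s * P k s + s * (1 - lam * s) * P' k s.
Proof. cbn [bel_poly peval]. rewrite !peval_padd, peval_pscale. simpl. ring. Qed.

Lemma peval_pder_bel_poly_S (k : nat) (s : R) :
  P' (S k) s = P k s + (1 + s - 2 * lam * s) * P' k s + s * (1 - lam * s) * P'' k s.
Proof.
  rewrite <- Derive_peval.
  rewrite (Derive_ext _ (fun s => s * P k s + s * (1 - lam * s) * P' k s))
    by apply peval_bel_poly_S.
  apply is_derive_unique. auto_derive.
  - repeat split; apply ex_derive_peval.
  - rewrite !Derive_peval. ring.
Qed.

Definition bel_red (k : nat) (s : R) : R := P k s - lam * s * P' k s.

Lemma bel_poly_diff (k : nat) (s : R) :
  P k s - lam * P (S k) s = (1 - lam * s) * bel_red k s.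
Proof. rewrite peval_bel_poly_S. unfold bel_red. ring. Qed.

Lemma ex_derive_bel_red (k : nat) (s : R) : ex_derive (bel_red k) s.
Proof.
  unfold bel_red. auto_derive.
  repeat split; apply ex_derive_peval.
Qed.

Lemma bel_red_S (k : nat) (s : R) :
  bel_red (S k) s = (1 - lam) * s * bel_red k s + s * (1 - lam * s) * Derive (bel_red k) s.
Proof.
  assert (D : Derive (bel_red k) s = (1 - lam) * P' k s - lam * s * P'' k s).
  { unfold bel_red. apply is_derive_unique. auto_derive.
    - repeat split; apply ex_derive_peval.
    - rewrite !Derive_peval. ring. }
  rewrite D. unfold bel_red. rewrite peval_bel_poly_S, peval_pder_bel_poly_S. ring.
Qed.

Lemma sum_binom_bel_red (n : nat) (s : R) :
  sum_lt n (fun l => Binomial.C n l * bel_red l s) = P' n s.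
Proof.
  revert s; induction n as [|n IH]; intros s.
  - unfold sum_lt; simpl; ring.
  - assert (D : sum_lt n (fun l => Binomial.C n l * Derive (bel_red l) s) = P'' n s).
    { transitivity (Derive (fun z => sum_lt n (fun l => Binomial.C n l * bel_red l z)) s).
      - symmetry; apply is_derive_unique, is_derive_sum_lt.
        intros l _; apply is_derive_scal, Derive_correct, ex_derive_bel_red.
      - rewrite (Derive_ext _ _ s IH). apply Derive_peval. }
    rewrite sum_lt_pascal, sum_lt_succ_r, IH, C_n_n.
    rewrite (sum_lt_ext n _ (fun l => (1 - lam) * s * (Binomial.C n l * bel_red l s)
               + s * (1 - lam * s) * (Binomial.C n l * Derive (bel_red l) s)))
      by (intros l _; rewrite bel_red_S; ring).
    rewrite sum_lt_plus, !sum_lt_scal, IH, D, peval_pder_bel_poly_S.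
    unfold bel_red. ring.
Qed.

Lemma sum_binom_bel_poly_diff (n : nat) (s : R) :
  sum_lt n (fun l => Binomial.C n l * (P l s - lam * P (S l) s)) = (1 - lam * s) * P' n s.
Proof.
  rewrite (sum_lt_ext n _ (fun l => (1 - lam * s) * (Binomial.C n l * bel_red l s)))
    by (intros l _; rewrite bel_poly_diff; ring).
  now rewrite sum_lt_scal, sum_binom_bel_red.
Qed.

End BelPoly.

Lemma locally_pos (f : R -> R) (t : R) :
  ex_derive f t -> 0 < f t -> locally t (fun u => 0 < f u).
Proof.
  intros Hd Hpos.
  apply (ex_derive_continuous f t Hd (fun v => 0 < v)).
  now apply (open_gt 0).
Qed.

Section GeneratingFunction.

Variables lam x : R.
Hypothesis lam_neq0 : lam <> 0.
Hypothesis base_pos : 0 < 1 + lam * x.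

Definition bel_arg (t : R) : R := x * exp t / (1 + lam * x * exp t).

Lemma is_derive_bel_gen_poly (k : nat) (t : R) : 0 < 1 + lam * x * exp t ->
  is_derive (fun u => bel_gen lam x u * peval (bel_poly lam k) (bel_arg u)) t
    (bel_gen lam x t * peval (bel_poly lam (S k)) (bel_arg t)).
Proof.
  intros Ht. rewrite peval_bel_poly_S.
  unfold bel_gen, Rpower, bel_arg. auto_derive.
  - refine (conj _ (conj (ex_derive_peval _ _) (conj _ I))); [apply Rdiv_lt_0_compat|]; lra.
  - rewrite Derive_peval. unfold Rdiv. field. lra.
Qed.

Lemma Derive_n_bel_gen (k : nat) (t : R) : 0 < 1 + lam * x * exp t ->
  Derive_n (bel_gen lam x) k t = bel_gen lam x t * peval (bel_poly lam k) (bel_arg t).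
Proof.
  revert t; induction k as [|k IH]; intros t Ht.
  - simpl. ring.
  - cbn [Derive_n].
    rewrite (Derive_ext_loc _ (fun u => bel_gen lam x u * peval (bel_poly lam k) (bel_arg u))).
    + apply is_derive_unique, is_derive_bel_gen_poly, Ht.
    + apply (filter_imp (fun u => 0 < 1 + lam * x * exp u)); [exact IH|].
      apply locally_pos; [auto_derive; exact I | exact Ht].
Qed.

End GeneratingFunction.

Lemma Bel_eq_peval (k : nat) (lam x : R) : lam <> 0 -> 0 < 1 + lam * x ->
  Bel k lam x = peval (bel_poly lam k) (x / (1 + lam * x)).
Proof.
  intros Hlam Hx. unfold Bel.
  rewrite Derive_n_bel_gen by (try rewrite exp_0; lra).
  unfold bel_gen, bel_arg, Rpower.
  rewrite exp_0, !Rmult_1_r, Rdiv_diag, ln_1, Rmult_0_r, exp_0 by lra.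
  ring.
Qed.

Theorem theorem10 (lam : R) (n : nat) (x : R) :
  lam <> 0 -> 0 < 1 + lam * x ->
  is_derive (fun y => Bel n lam y) x
    (/ (1 + lam * x) *
     sum_lt n (fun l => Binomial.C n l * (Bel l lam x - lam * Bel (S l) lam x))).
Proof.
  intros Hlam Hx.
  rewrite (sum_lt_ext n _ (fun l => Binomial.C n l *
             (peval (bel_poly lam l) (x / (1 + lam * x))
              - lam * peval (bel_poly lam (S l)) (x / (1 + lam * x)))))
    by (intros l _; now rewrite !Bel_eq_peval).
  rewrite sum_binom_bel_poly_diff.
  apply (is_derive_ext_loc (fun y => peval (bel_poly lam n) (y / (1 + lam * y)))).
  { apply (filter_imp (fun y => 0 < 1 + lam * y)).
    - intros y Hy. symmetry. now apply Bel_eq_peval.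
    - apply locally_pos; [auto_derive; exact I | exact Hx]. }
  auto_derive.
  - refine (conj (ex_derive_peval _ _) (conj _ I)); lra.
  - rewrite Derive_peval. unfold Rdiv. field. lra.
Qed.
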